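(* Let $u\in\mathcal H_k$, let $\Lambda\subset\mathcal H_k'$ satisfy $\sup_{\lambda\in\Lambda}\|v_\lambda\|_{\mathcal H_k}\le1$, and let $\lambda_1,\lambda_2,\dots$ be selected from $\Lambda$ by a PDE-$\beta$-greedy algorithm applied to $u$, with $r_i:=u-\Pi_{V(\Lambda_i)}(u)$. Then for $n=1,2,\dots$: (a) if $\beta\in[0,1]$: $$\Big[\prod_{i=n+1}^{2n}\sup_{\lambda\in\Lambda}|\lambda(r_i)|\Big]^{1/n}\le n^{-\beta/2}\,\|r_{n+1}\|_{\mathcal H_k}\,\Big[\prod_{i=n+1}^{2n}P_{\Lambda_i}(\lambda_{i+1})\Big]^{1/n};$$ (b) if $\beta\in(1,\infty)$: $$\Big[\prod_{i=n+1}^{2n}\sup_{\lambda\in\Lambda}|\lambda(r_i)|\Big]^{1/n}\le n^{-1/2}\,\|r_{n+1}\|_{\mathcal H_k}\,\Big[\prod_{i=n+1}^{2n}P_{\Lambda_i}(\lambda_{i+1})^{1/\beta}\Big]^{1/n}.$$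
   Context: $\mathcal H_k$ is the reproducing kernel Hilbert space of a kernel $k$; each $\lambda\in\mathcal H_k'$ has Riesz representer $v_\lambda$. For $\Lambda_i=\{\lambda_1,\dots,\lambda_i\}$ ($\Lambda_0=\emptyset$), $V(\Lambda_i)=\mathrm{span}\{v_\mu:\mu\in\Lambda_i\}$, $\Pi_{V(\Lambda_i)}$ the orthogonal projection, and $P_{\Lambda_i}(\lambda):=\|v_\lambda-\Pi_{V(\Lambda_i)}v_\lambda\|_{\mathcal H_k}$ the generalized power function. A PDE-$\beta$-greedy algorithm selects, for $\beta\in[0,\infty)$, $\lambda_{n+1}\in\arg\max_{\lambda\in\Lambda\setminus\Lambda_n,\ \lambda\neq0}|\lambda(u-\Pi_{V(\Lambda_n)}u)|^{\beta}\,P_{\Lambda_n}(\lambda)^{1-\beta}$, and for $\beta=\infty$, $\lambda_{n+1}\in\arg\max_{\lambda\in\Lambda\setminus\Lambda_n,\ \lambda\ne0}|\lambda(u-\Pi_{V(\Lambda_n)}u)|/P_{\Lambda_n}(\lambda)$ (maximizers assumed to exist). *)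

From HB Require Import structures.
From mathcomp Require Import all_boot all_order all_algebra.
From mathcomp Require Import all_classical all_reals all_analysis.
Set Implicit Arguments. Unset Strict Implicit. Unset Printing Implicit Defensive.
Import Order.TTheory GRing.Theory Num.Theory.
Local Open Scope classical_set_scope.
Local Open Scope ring_scope.

Section Defs.
Variables (R : realType) (V : lmodType R).

Definition is_inner_product (ip : V -> V -> R) : Prop :=
  [/\ forall x y, ip x y = ip y x,
      forall x y z, ip (x + y) z = ip x z + ip y z,
      forall (a : R) x y, ip (a *: x) y = a * ip x y,
      forall x, 0 <= ip x x
    & forall x, ip x x = 0 -> x = 0].

Variable ip : V -> V -> R.

Definition hnorm (x : V) : R := Num.sqrt (ip x x).

Definition in_span (s : seq V) (x : V) : Prop :=
  exists c : nat -> R, x = \sum_(i < size s) c i *: s`_i.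

Definition is_orth_proj (s : seq V) (u p : V) : Prop :=
  in_span s p /\ forall i, (i < size s)%N -> ip (u - p) s`_i = 0.

Definition orth_proj (s : seq V) (u : V) : V := xget 0 (is_orth_proj s u).

Variables (rep : (V -> R) -> V) (lam : nat -> (V -> R)).

Definition in_Lam_n (n : nat) (mu : V -> R) : Prop :=
  exists2 i, (1 <= i <= n)%N & mu = lam i.

(* Riesz representers of Lambda_n, spanning V(Lambda_n) *)
Definition reps_n (n : nat) : seq V := [seq rep (lam i) | i <- iota 1 n].

Definition proj_n (n : nat) (x : V) : V := orth_proj (reps_n n) x.

Definition power_fun (n : nat) (mu : V -> R) : R :=
  hnorm (rep mu - proj_n n (rep mu)).

Variable u : V.

Definition resid (n : nat) : V := u - proj_n n u.

Definition greedy_crit (beta : R) (n : nat) (mu : V -> R) : R :=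
  (`|mu (resid n)| `^ beta) * (power_fun n mu `^ (1 - beta)).

Definition is_PDE_beta_greedy (Lam : set (V -> R)) (beta : R) : Prop :=
  forall n : nat,
    [/\ Lam (lam n.+1), ~ in_Lam_n n (lam n.+1), lam n.+1 <> (fun _ => 0)
      & forall mu, Lam mu -> ~ in_Lam_n n mu -> mu <> (fun _ => 0) ->
          greedy_crit beta n mu <= greedy_crit beta n (lam n.+1)].

End Defs.

From HB Require Import structures.
From mathcomp Require Import all_boot all_order all_algebra.
From mathcomp Require Import all_classical all_reals all_analysis.
From mathcomp Require Import ring.
Set Implicit Arguments. Unset Strict Implicit. Unset Printing Implicit Defensive.
Import Order.TTheory GRing.Theory Num.Theory.
Local Open Scope classical_set_scope.
Local Open Scope ring_scope.

(* Let w_i := v_{lam_(i+1)} - Pi_i v_{lam_(i+1)}, so P_i(lam_(i+1)) = ||w_i||, and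
   let q_i := ||r_i - r_(i+1)||.  One Gram-Schmidt step shows that r_i - r_(i+1)
   is the projection of r_i onto w_i, hence q_i P_i(lam_(i+1)) = |lam_(i+1)(r_i)|,
   and Pythagoras gives ||r_(i+1)||^2 + q_i^2 = ||r_i||^2.  Summing over
   i = n+1..2n bounds sum q_i^2 by ||r_(n+1)||^2, so by AM-GM the geometric mean
   of the q_i is at most n^(-1/2) ||r_(n+1)||.  Cauchy-Schwarz gives
   |lam(r_i)| <= P_i(lam) ||r_i||, and comparing the greedy criterion of any lam
   with that of lam_(i+1) yields
     sup |lam(r_i)| <= q_i^beta P_i(lam_(i+1)) ||r_i||^(1-beta)   if beta <= 1,
     sup |lam(r_i)| <= q_i P_i(lam_(i+1))^(1/beta)               if beta > 1,
   the latter because P_i(lam) <= 1.  Taking geometric means over the window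
   gives both estimates. *)

Section InnerProduct.
Variables (R : realType) (V : lmodType R) (ip : V -> V -> R).
Hypothesis hip : is_inner_product ip.
Implicit Types (s : seq V) (u x y z : V).

Lemma ipC x y : ip x y = ip y x. Proof. by case: hip. Qed.
Lemma ipDl x y z : ip (x + y) z = ip x z + ip y z. Proof. by case: hip. Qed.
Lemma ipZl a x y : ip (a *: x) y = a * ip x y. Proof. by case: hip. Qed.
Lemma ip_ge0 x : 0 <= ip x x. Proof. by case: hip. Qed.
Lemma ip_eq0 x : ip x x = 0 -> x = 0. Proof. by case: hip => _ _ _ _; apply. Qed.

Lemma ipDr x y z : ip x (y + z) = ip x y + ip x z.
Proof. by rewrite ipC ipDl !(ipC x). Qed.
Lemma ipZr a x y : ip x (a *: y) = a * ip x y.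
Proof. by rewrite ipC ipZl ipC. Qed.
Lemma ip0l y : ip 0 y = 0.
Proof. by rewrite -(scale0r (0 : V)) ipZl mul0r. Qed.
Lemma ip0r y : ip y 0 = 0.
Proof. by rewrite ipC ip0l. Qed.
Lemma ipNl x y : ip (- x) y = - ip x y.
Proof. by rewrite -scaleN1r ipZl mulN1r. Qed.
Lemma ipBl x y z : ip (x - y) z = ip x z - ip y z.
Proof. by rewrite ipDl ipNl. Qed.
Lemma ipBr x y z : ip z (x - y) = ip z x - ip z y.
Proof. by rewrite !(ipC z) ipBl. Qed.
Lemma ip_sumr x n (F : 'I_n -> V) : ip x (\sum_(i < n) F i) = \sum_(i < n) ip x (F i).
Proof.
elim: n F => [|n IH] F; first by rewrite !big_ord0 ip0r.
by rewrite !big_ord_recr /= ipDr IH.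
Qed.

Lemma ip_neq0 x : x != 0 -> ip x x != 0.
Proof. by apply: contra_neq; apply: ip_eq0. Qed.

Lemma ip_pythagoras x y : ip x y = 0 -> ip (x + y) (x + y) = ip x x + ip y y.
Proof. by move=> xy0; rewrite ipDl !ipDr xy0 (ipC y x) xy0 addr0 add0r. Qed.

Lemma ip_sqr_le x y : ip x y ^+ 2 <= ip x x * ip y y.
Proof.
have [->|x_neq0] := eqVneq x 0; first by rewrite !ip0l expr0n mul0r.
have xx_gt0 : 0 < ip x x by rewrite lt0r ip_neq0 ?ip_ge0.
pose t := ip x y / ip x x.
have := ip_ge0 (y - t *: x).
rewrite !ipBl !ipBr !ipZl !ipZr (ipC y x).
have -> : ip y y - t * ip x y - (t * ip x y - t * (t * ip x x)) =
          ip y y - ip x y ^+ 2 / ip x x.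
  by rewrite /t; field; apply: lt0r_neq0.
by rewrite subr_ge0 ler_pdivrMr // mulrC.
Qed.

Lemma hnorm_ge0 x : 0 <= hnorm ip x. Proof. exact: sqrtr_ge0. Qed.

Lemma hnorm_sqr x : hnorm ip x ^+ 2 = ip x x.
Proof. by rewrite sqr_sqrtr ?ip_ge0. Qed.

Lemma hnormZ a x : hnorm ip (a *: x) = `|a| * hnorm ip x.
Proof. by rewrite /hnorm ipZl ipZr mulrA -expr2 sqrtrM ?sqr_ge0 // sqrtr_sqr. Qed.

Lemma normr_ip_le x y : `|ip x y| <= hnorm ip x * hnorm ip y.
Proof.
rewrite /hnorm -sqrtrM ?ip_ge0 // -sqrtr_sqr.
by rewrite ler_sqrt ?ip_sqr_le // mulr_ge0 ?ip_ge0.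
Qed.

Lemma in_span0 s : in_span s 0.
Proof. by exists (fun=> 0); rewrite big1 // => i _; rewrite scale0r. Qed.

Lemma in_spanD s x y : in_span s x -> in_span s y -> in_span s (x + y).
Proof.
move=> [c ->] [d ->]; exists (fun i => c i + d i).
by rewrite -big_split /=; apply: eq_bigr => i _; rewrite scalerDl.
Qed.

Lemma in_spanZ s a x : in_span s x -> in_span s (a *: x).
Proof.
move=> [c ->]; exists (fun i => a * c i).
by rewrite scaler_sumr; apply: eq_bigr => i _; rewrite scalerA.
Qed.

Lemma in_spanB s x y : in_span s x -> in_span s y -> in_span s (x - y).
Proof. by move=> sx sy; rewrite -scaleN1r; apply/in_spanD/in_spanZ. Qed.

Lemma in_span_rcons s y x a : in_span s x -> in_span (rcons s y) (x + a *: y).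
Proof.
move=> [c ->]; exists (fun i => if (i < size s)%N then c i else a).
rewrite size_rcons big_ord_recr /= ltnn nth_rcons ltnn eqxx; congr (_ + _).
by apply: eq_bigr => i _; rewrite nth_rcons ltn_ord.
Qed.

Lemma ip_span_eq0 s z x : (forall i, (i < size s)%N -> ip z s`_i = 0) ->
  in_span s x -> ip z x = 0.
Proof. by move=> z_orth [c ->]; rewrite ip_sumr big1 // => i _; rewrite ipZr z_orth ?mulr0. Qed.

(* One Gram-Schmidt step.  If [y] lies in [span s], then [w = 0] and the
   coefficient is [_ / 0 = 0]. *)
Lemma is_orth_proj_rcons s y u p py :
  is_orth_proj ip s u p -> is_orth_proj ip s y py ->
  let w := y - py in
  is_orth_proj ip (rcons s y) u (p + (ip (u - p) w / ip w w) *: w).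
Proof.
move=> [p_in p_orth] [py_in py_orth] w; set c := _ / _.
have orth_s i : (i < size s)%N -> ip (u - (p + c *: w)) s`_i = 0.
  by move=> lt_is; rewrite opprD addrA ipBl ipZl p_orth // py_orth // mulr0 subrr.
split.
  have -> : p + c *: w = (p - c *: py) + c *: y by rewrite scalerBr addrA addrAC.
  exact/in_span_rcons/in_spanB/in_spanZ.
move=> i; rewrite size_rcons ltnS leq_eqVlt => /orP[/eqP ->|lt_is]; last first.
  by rewrite nth_rcons lt_is orth_s.
rewrite nth_rcons ltnn eqxx -(subrK py y) -/w ipDr (ip_span_eq0 orth_s py_in).
rewrite addr0 opprD addrA ipBl ipZl.
have [w0|w_neq0] := eqVneq w 0; first by rewrite w0 !ip0r mulr0 subrr.
by rewrite /c divfK ?ip_neq0 ?subrr.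
Qed.

Lemma is_orth_proj_ex s u : exists p, is_orth_proj ip s u p.
Proof.
elim/last_ind: s u => [|s y IH] u; first by exists 0; split; [apply: in_span0|].
have [p hp] := IH u; have [py hpy] := IH y.
by eexists; apply: is_orth_proj_rcons hp hpy.
Qed.

Lemma is_orth_proj_uniq s u p q :
  is_orth_proj ip s u p -> is_orth_proj ip s u q -> p = q.
Proof.
move=> [p_in p_orth] [q_in q_orth]; apply/eqP; rewrite -subr_eq0; apply/eqP/ip_eq0.
have pq_in := in_spanB p_in q_in.
have -> : ip (p - q) = ip ((u - q) - (u - p)) by rewrite opprB [in RHS]addrC addrA subrK.
by rewrite ipBl (ip_span_eq0 q_orth pq_in) (ip_span_eq0 p_orth pq_in) subrr.
Qed.

Lemma orth_projP s u : is_orth_proj ip s u (orth_proj ip s u).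
Proof. by apply: xgetPex; apply: is_orth_proj_ex. Qed.

Lemma orth_proj_rcons s y u :
  let w := y - orth_proj ip s y in
  orth_proj ip (rcons s y) u =
    orth_proj ip s u + (ip (u - orth_proj ip s u) w / ip w w) *: w.
Proof.
apply: is_orth_proj_uniq (orth_projP _ _) _.
exact: is_orth_proj_rcons (orth_projP _ _) (orth_projP _ _).
Qed.

Lemma ip_orth_proj_span s u x : in_span s x -> ip x (u - orth_proj ip s u) = 0.
Proof. by move=> x_in; rewrite ipC; exact: (ip_span_eq0 (orth_projP s u).2 x_in). Qed.

Lemma ip_sub_orth_proj s x u :
  ip (x - orth_proj ip s x) (u - orth_proj ip s u) = ip x (u - orth_proj ip s u).
Proof. by rewrite ipBl (ip_orth_proj_span _ (orth_projP s x).1) subr0. Qed.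

Lemma hnorm_sub_orth_proj_le s x : hnorm ip (x - orth_proj ip s x) <= hnorm ip x.
Proof.
have xp_orth : ip (x - orth_proj ip s x) (orth_proj ip s x) = 0.
  by rewrite ipC (ip_orth_proj_span _ (orth_projP s x).1).
rewrite /hnorm ler_sqrt ?ip_ge0 //.
set p := orth_proj ip s x; have -> : ip x x = ip (x - p + p) (x - p + p) by rewrite subrK.
by rewrite [leRHS]ip_pythagoras // lerDl ip_ge0.
Qed.

Lemma orth_proj_rcons_pythagoras s y u :
  let p := orth_proj ip s u in let p' := orth_proj ip (rcons s y) u in
  hnorm ip (u - p') ^+ 2 + hnorm ip (p' - p) ^+ 2 = hnorm ip (u - p) ^+ 2.
Proof.
move=> p p'; rewrite !hnorm_sqr -ip_pythagoras; first by rewrite addrA subrK.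
rewrite ipC ip_orth_proj_span //.
apply: in_spanB; first by case: (orth_projP (rcons s y) u).
by rewrite -[p]addr0 -(scale0r y); apply: in_span_rcons; case: (orth_projP s u).
Qed.

End InnerProduct.

Section GeometricMeans.
Variable R : realType.
Implicit Types (x y b c rho : R) (n : nat).

Lemma powR_split x b : 0 <= x -> x = x `^ b * x `^ (1 - b).
Proof.
by move=> x_ge0; rewrite -powRD addrC subrK ?powRr1 // oner_eq0.
Qed.

Lemma powR_le_cancel x y b : 0 <= x -> 0 <= y -> 0 < b -> x `^ b <= y `^ b -> x <= y.
Proof.
move=> x_ge0 y_ge0 b_gt0; apply: contraTT; rewrite -!ltNge => yx.
exact: gt0_ltr_powR.
Qed.

Lemma powR_root c n : 0 <= c -> (0 < n)%N -> (c ^+ n) `^ n%:R^-1 = c.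
Proof.
move=> c_ge0 n_gt0; rewrite -powR_mulrn // -powRrM mulfV ?powRr1 //.
by rewrite pnatr_eq0 -lt0n.
Qed.

Lemma prodr_powR n (F : 'I_n -> R) b : (forall i, 0 <= F i) ->
  \prod_(i < n) F i `^ b = (\prod_(i < n) F i) `^ b.
Proof.
elim: n F => [|n IH] F F_ge0; first by rewrite !big_ord0 powR1.
rewrite !big_ord_recr /= IH => [|i]; last exact: F_ge0.
by rewrite powRM ?F_ge0 ?prodr_ge0.
Qed.

Lemma geomean_scale n (F : 'I_n -> R) c : (0 < n)%N -> 0 <= c ->
  (forall i, 0 <= F i) ->
  (\prod_(i < n) (F i * c)) `^ n%:R^-1 = (\prod_(i < n) F i) `^ n%:R^-1 * c.
Proof.
move=> n_gt0 c_ge0 F_ge0; rewrite big_split /= prodr_const card_ord.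
by rewrite powRM ?powR_root ?exprn_ge0 // prodr_ge0.
Qed.

(* AM-GM applied to the squares [q i ^+ 2]. *)
Lemma geomean_le_rms n (q : 'I_n -> R) rho : (0 < n)%N -> 0 <= rho ->
  (forall i, 0 <= q i) -> \sum_(i < n) q i ^+ 2 <= rho ^+ 2 ->
  (\prod_(i < n) q i) `^ n%:R^-1 <= n%:R `^ (- (1 / 2)) * rho.
Proof.
move=> n_gt0 rho_ge0 q_ge0 sum_le.
have n_pos : (0 : R) < n%:R by rewrite ltr0n.
set c := _ * rho; have c_ge0 : 0 <= c by rewrite mulr_ge0 ?powR_ge0.
have c_sqr : c ^+ 2 = rho ^+ 2 / n%:R.
  rewrite exprMn -[_ `^ _ ^+ 2]powR_mulrn ?powR_ge0 // -powRrM mulrC.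
  by rewrite mulNr div1r mulVf ?pnatr_eq0 // powR_inv1 ?ler0n // mulrC.
rewrite -(powR_root c_ge0 n_gt0); apply: ge0_ler_powR;
  rewrite ?nnegrE ?invr_ge0 ?ler0n ?exprn_ge0 ?prodr_ge0 //.
rewrite -ler_sqr ?nnegrE ?exprn_ge0 ?prodr_ge0 // -prodrXl -exprM mulnC exprM c_sqr.
have [agm _] := leif_AGM (A := [pred _ : 'I_n | true]) (E := fun i => q i ^+ 2)
  (fun i _ => sqr_ge0 (q i)).
rewrite cardT /= size_enum_ord in agm; apply: le_trans agm _.
apply: lerXn2r; rewrite ?nnegrE ?divr_ge0 ?ler0n ?sqr_ge0 ?sumr_ge0 //; last first.
  by rewrite ler_pM2r ?invr_gt0.
by move=> i _; apply: sqr_ge0.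
Qed.

Lemma geomean_le n (S q c : 'I_n -> R) rho b : (0 < n)%N -> 0 <= b -> 0 <= rho ->
  (forall i, 0 <= S i) -> (forall i, 0 <= q i) -> (forall i, 0 <= c i) ->
  (forall i, S i <= q i `^ b * c i) -> \sum_(i < n) q i ^+ 2 <= rho ^+ 2 ->
  (\prod_(i < n) S i) `^ n%:R^-1 <=
    (n%:R `^ (- (1 / 2)) * rho) `^ b * (\prod_(i < n) c i) `^ n%:R^-1.
Proof.
move=> n_gt0 b_ge0 rho_ge0 S_ge0 q_ge0 c_ge0 S_le sum_le.
have ni_ge0 : 0 <= (n%:R : R)^-1 by rewrite invr_ge0 ler0n.
apply: (@le_trans _ _ ((\prod_(i < n) (q i `^ b * c i)) `^ n%:R^-1)).
  apply: ge0_ler_powR; rewrite ?nnegrE ?prodr_ge0 //; last first.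
    by apply: ler_prod => i _; rewrite S_ge0 S_le.
  by move=> i _; rewrite mulr_ge0 ?powR_ge0.
rewrite big_split /= prodr_powR // [leLHS]powRM ?powR_ge0 ?prodr_ge0 // -powRAC.
apply: ler_wpM2r; first exact: powR_ge0.
by apply: ge0_ler_powR; rewrite ?nnegrE ?powR_ge0 ?mulr_ge0 ?geomean_le_rms.
Qed.

Lemma prod_window (F : nat -> R) n :
  \prod_(n.+1 <= i < (2 * n).+1) F i = \prod_(i < n) F (i + n.+1)%N.
Proof.
rewrite -{1}[n.+1]add0n big_addn big_mkord.
by rewrite (_ : (2 * n).+1 - n.+1 = n)%N // subSS mul2n -addnn addnK.
Qed.

End GeometricMeans.

Lemma sup_normr_image_le (R : realType) (T : Type) (A : set T) (f : T -> R) (B : R) :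
  A !=set0 -> (forall x, A x -> `|f x| <= B) -> 0 <= sup [set `|f x| | x in A] <= B.
Proof.
move=> [x0 Ax0] f_le.
have ub : ubound [set `|f x| | x in A] B by move=> _ [x Ax <-]; apply: f_le.
apply/andP; split; last by apply: ge_sup => //; exists `|f x0|, x0.
by apply: le_trans (normr_ge0 (f x0)) _; apply: ub_le_sup; [exists B | exists x0].
Qed.

Section PDEGreedy.
Variables (R : realType) (V : lmodType R) (ip : V -> V -> R).
Hypothesis hip : is_inner_product ip.
Variables (u : V) (Lam : set (V -> R)) (rep : (V -> R) -> V).
Hypothesis hrep : forall l, Lam l -> forall f : V, l f = ip (rep l) f.
Hypothesis hbound : forall l, Lam l -> hnorm ip (rep l) <= 1.
Variables (beta : R) (lam : nat -> (V -> R)).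
Hypothesis hgreedy : is_PDE_beta_greedy ip rep lam u Lam beta.

Local Notation r := (resid ip rep lam u).
Local Notation proj := (proj_n ip rep lam).
Local Notation P := (power_fun ip rep lam).
Local Notation crit := (greedy_crit ip rep lam u beta).
Local Notation q i := (hnorm ip (proj i.+1 u - proj i u)).

Lemma reps_n_S i : reps_n rep lam i.+1 = rcons (reps_n rep lam i) (rep (lam i.+1)).
Proof. by rewrite /reps_n -[X in iota _ X]addn1 iotaD map_cat /= cats1 add1n. Qed.

Lemma Lam_lam j : (0 < j)%N -> Lam (lam j).
Proof. by case: j => // j _; case: (hgreedy j). Qed.

Lemma power_fun_ge0 i l : 0 <= P i l.
Proof. exact: hnorm_ge0. Qed.

Lemma lam_resid_eq0 i j : (j < i)%N -> lam j.+1 (r i) = 0.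
Proof.
move=> lt_ji; rewrite hrep; last exact: Lam_lam.
rewrite (ipC hip).
have := (orth_projP hip (reps_n rep lam i) u).2 j.
by rewrite /reps_n size_map size_iota (nth_map 0%N) ?size_iota // nth_iota // add1n; apply.
Qed.

Lemma greedy_crit_le i l : Lam l -> l (r i) != 0 -> crit i l <= crit i (lam i.+1).
Proof.
move=> Lam_l l_r; case: (hgreedy i) => _ _ _; apply=> // [[[|k] //= lt_ki l_eq]|l0].
  by move: l_r; rewrite l_eq lam_resid_eq0 ?eqxx.
by move: l_r; rewrite l0 eqxx.
Qed.

Lemma apply_resid l i : Lam l -> l (r i) = ip (rep l - proj i (rep l)) (r i).
Proof. by move=> Lam_l; rewrite hrep // (ip_sub_orth_proj hip). Qed.

Lemma normr_apply_resid_le l i : Lam l -> `|l (r i)| <= P i l * hnorm ip (r i).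
Proof. by move=> Lam_l; rewrite apply_resid // (normr_ip_le hip). Qed.

Lemma power_fun_le1 l i : Lam l -> P i l <= 1.
Proof. by move=> Lam_l; apply: le_trans (hbound Lam_l); exact: hnorm_sub_orth_proj_le. Qed.

Lemma hnorm_resid_S i : hnorm ip (r i.+1) ^+ 2 + q i ^+ 2 = hnorm ip (r i) ^+ 2.
Proof. by rewrite /resid /proj_n reps_n_S (orth_proj_rcons_pythagoras hip). Qed.

Lemma proj_n_S i x : let w := rep (lam i.+1) - proj i (rep (lam i.+1)) in
  proj i.+1 x = proj i x + (ip (x - proj i x) w / ip w w) *: w.
Proof. by rewrite /proj_n reps_n_S (orth_proj_rcons hip). Qed.

(* [proj i.+1 u - proj i u] is a multiple of the vector [w] of [proj_n_S],
   whose norm is [P i (lam i.+1)]. *)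
Lemma normr_lam_resid i : `|lam i.+1 (r i)| = q i * P i (lam i.+1).
Proof.
rewrite apply_resid; last exact: Lam_lam.
rewrite /power_fun proj_n_S addrAC subrr add0r (hnormZ hip) -/(r i).
set w := _ - _.
have [->|w_neq0] := eqVneq w 0.
  by rewrite (ip0l hip) normr0 /hnorm (ip0l hip) sqrtr0 !mulr0.
rewrite -mulrA -expr2 (hnorm_sqr hip) normrM normfV (ger0_norm (ip_ge0 hip w)).
by rewrite mulfVK ?(ip_neq0 hip) // (ipC hip).
Qed.

Lemma hnorm_resid_telescope m k :
  hnorm ip (r (k + m)) ^+ 2 + \sum_(i < k) q (i + m)%N ^+ 2 = hnorm ip (r m) ^+ 2.
Proof.
elim: k => [|k IH]; first by rewrite big_ord0 addr0.
by rewrite big_ord_recr /= addrA addrAC addSn hnorm_resid_S.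
Qed.

Lemma sum_drop_sqr_le m k : \sum_(i < k) q (i + m)%N ^+ 2 <= hnorm ip (r m) ^+ 2.
Proof. by rewrite -(hnorm_resid_telescope m k) lerDr sqr_ge0. Qed.

Lemma hnorm_resid_le m i : (m <= i)%N -> hnorm ip (r i) <= hnorm ip (r m).
Proof.
move=> /subnK <-; rewrite -ler_sqr ?nnegrE ?hnorm_ge0 //.
rewrite -(hnorm_resid_telescope m (i - m)) lerDl.
by apply: sumr_ge0 => j _; apply: sqr_ge0.
Qed.

Lemma greedy_crit_lam i : crit i (lam i.+1) = q i `^ beta * P i (lam i.+1).
Proof.
rewrite /greedy_crit normr_lam_resid powRM ?hnorm_ge0 ?power_fun_ge0 //.
by rewrite -mulrA -powR_split ?power_fun_ge0.
Qed.

Lemma apply_resid_le_greedy_le1 i l : beta <= 1 -> Lam l ->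
  `|l (r i)| <= q i `^ beta * P i (lam i.+1) * hnorm ip (r i) `^ (1 - beta).
Proof.
move=> beta_le1 Lam_l.
have [->|l_r] := eqVneq (l (r i)) 0.
  by rewrite normr0 !mulr_ge0 ?powR_ge0 ?power_fun_ge0.
rewrite -greedy_crit_lam; apply: le_trans (ler_wpM2r (powR_ge0 _ _) (greedy_crit_le Lam_l l_r)).
rewrite /greedy_crit -mulrA -powRM ?power_fun_ge0 ?hnorm_ge0 //.
rewrite {1}(powR_split beta (normr_ge0 (l (r i)))) ler_wpM2l ?powR_ge0 //.
apply: ge0_ler_powR; rewrite ?nnegrE ?subr_ge0 ?mulr_ge0 ?power_fun_ge0 ?hnorm_ge0 //.
exact: normr_apply_resid_le.
Qed.

(* For [beta > 1] the factor [P i l `^ (1 - beta)] of the criterion is at least [1]. *)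
Lemma apply_resid_le_greedy_gt1 i l : 1 < beta -> Lam l ->
  `|l (r i)| <= q i * P i (lam i.+1) `^ beta^-1.
Proof.
move=> beta_gt1 Lam_l; have beta_gt0 : 0 < beta by apply: lt_trans beta_gt1.
have rhs_ge0 : 0 <= q i * P i (lam i.+1) `^ beta^-1 by rewrite mulr_ge0 ?hnorm_ge0 ?powR_ge0.
have [->|l_r] := eqVneq (l (r i)) 0; first by rewrite normr0.
have Pl_gt0 : 0 < P i l.
  rewrite lt0r power_fun_ge0 andbT; apply: contraNneq l_r => Pl0.
  by rewrite -normr_le0 -(mul0r (hnorm ip (r i))) -Pl0 normr_apply_resid_le.
apply: (powR_le_cancel (normr_ge0 _) rhs_ge0 beta_gt0).
rewrite powRM ?hnorm_ge0 ?powR_ge0 // -powRrM mulVf ?gt_eqF // powRr1 ?power_fun_ge0 //.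
rewrite -greedy_crit_lam; apply: le_trans (greedy_crit_le Lam_l l_r).
rewrite -[leLHS]mulr1 ler_wpM2l ?powR_ge0 // -[leLHS](powRr0 (P i l)).
have Pl_le1 : 0 < P i l <= 1 by rewrite Pl_gt0 power_fun_le1.
by apply: (ger_powR Pl_le1); rewrite subr_le0 ltW.
Qed.

Lemma sup_apply_resid_le1 m i : beta <= 1 -> (m <= i)%N ->
  0 <= sup [set `|l (r i)| | l in Lam] <=
    q i `^ beta * (P i (lam i.+1) * hnorm ip (r m) `^ (1 - beta)).
Proof.
move=> beta_le1 le_mi; apply: sup_normr_image_le; first by exists (lam 1); apply: Lam_lam.
move=> l Lam_l; apply: le_trans (apply_resid_le_greedy_le1 i beta_le1 Lam_l) _.
rewrite mulrA ler_wpM2l ?mulr_ge0 ?powR_ge0 ?power_fun_ge0 //.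
by apply: ge0_ler_powR; rewrite ?nnegrE ?subr_ge0 ?hnorm_ge0 ?hnorm_resid_le.
Qed.

Lemma sup_apply_resid_gt1 i : 1 < beta ->
  0 <= sup [set `|l (r i)| | l in Lam] <= q i * P i (lam i.+1) `^ beta^-1.
Proof.
move=> beta_gt1; apply: sup_normr_image_le; first by exists (lam 1); apply: Lam_lam.
by move=> l; apply: apply_resid_le_greedy_gt1.
Qed.

End PDEGreedy.

Unset Implicit Arguments. Set Strict Implicit. Set Printing Implicit Defensive.

Theorem theorem4p6 (R : realType) (V : lmodType R) (ip : V -> V -> R)
  (hip : is_inner_product ip)
  (u : V) (Lam : set (V -> R)) (rep : (V -> R) -> V)
  (hrep : forall l, Lam l -> forall f : V, l f = ip (rep l) f)
  (hbound : forall l, Lam l -> hnorm ip (rep l) <= 1)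
  (beta : R) (hbeta : 0 <= beta) (lam : nat -> (V -> R))
  (hgreedy : is_PDE_beta_greedy ip rep lam u Lam beta) :
  forall n : nat, (0 < n)%N ->
    (beta <= 1 ->
      (\prod_(n.+1 <= i < (2 * n).+1)
          sup [set `|l (resid ip rep lam u i)| | l in Lam]) `^ (n%:R^-1)
      <= (n%:R `^ (- (beta / 2))) * hnorm ip (resid ip rep lam u n.+1)
         * (\prod_(n.+1 <= i < (2 * n).+1)
              power_fun ip rep lam i (lam i.+1)) `^ (n%:R^-1))
    /\
    (1 < beta ->
      (\prod_(n.+1 <= i < (2 * n).+1)
          sup [set `|l (resid ip rep lam u i)| | l in Lam]) `^ (n%:R^-1)
      <= (n%:R `^ (- (1 / 2))) * hnorm ip (resid ip rep lam u n.+1)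
         * (\prod_(n.+1 <= i < (2 * n).+1)
              (power_fun ip rep lam i (lam i.+1) `^ (beta^-1))) `^ (n%:R^-1)).
Proof.
move=> n n_gt0; set rho := hnorm ip (resid ip rep lam u n.+1).
have rho_ge0 : 0 <= rho by apply: hnorm_ge0.
have sum_le := sum_drop_sqr_le hip u rep lam n.+1 n.
rewrite !prod_window; split=> [beta_le1|beta_gt1].
- have sup_le (i : 'I_n) := sup_apply_resid_le1 hip hrep hgreedy beta_le1 (leq_addl i n.+1).
  have -> : n%:R `^ (- (beta / 2)) * rho =
            (n%:R `^ (- (1 / 2)) * rho) `^ beta * rho `^ (1 - beta).
    by rewrite powRM ?powR_ge0 // -powRrM -mulrA -powR_split // mulNr div1r (mulrC _^-1).
  rewrite -mulrA [rho `^ _ * _]mulrC -geomean_scale ?powR_ge0 // => [|i];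
    last exact: hnorm_ge0.
  apply: (geomean_le _ _ _ _ _ _ _ sum_le) => // i; try by case/andP: (sup_le i).
  + exact: hnorm_ge0.
  + by rewrite mulr_ge0 ?powR_ge0 //; apply: hnorm_ge0.
- have sup_le (i : 'I_n) := sup_apply_resid_gt1 hip hrep hbound hgreedy (i + n.+1) beta_gt1.
  rewrite -[_ * rho](powRr1 (mulr_ge0 (powR_ge0 _ _) rho_ge0)).
  apply: (geomean_le _ _ _ _ _ _ _ sum_le) => // i; first by case/andP: (sup_le i).
  + exact: hnorm_ge0.
  + exact: powR_ge0.
  by rewrite powRr1 ?hnorm_ge0 //; case/andP: (sup_le i).
Qed.
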